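(* Let $G=(g_1,\dots,g_k)\in\mathbb{N}_0^k$ be telescopic with $g_1>0$, $c(G)=(c_2,\dots,c_k)$ and $d=\gcd(G)$, and put $z_i=g_i/C_{i,k}$ for $1\le i\le k$ (these are non-negative integers, multiples of $d$, with $z_1=d$). Then $G$ is minimal if and only if $c_j>1$ for all $2\le j\le k$ and $z_j\nmid z_iC_{i,j}$ for all $1\le i<j\le k$.
   Context: For $G\in\mathbb{N}_0^k$, $\langle G\rangle$ is the set of $\mathbb{N}_0$-linear combinations of its entries; $G$ is minimal if no proper subsequence generates $\langle G\rangle$. $G_i=(g_1,\dots,g_i)$, $d_i=\gcd(G_i)$, $c_j=d_{j-1}/d_j$ for $2\le j\le k$. $G$ is telescopic if $c_jg_j\in\langle G_{j-1}\rangle$ for $2\le j\le k$. For $0\le m,n$, $C_{m,n}=\prod_{j=m+1}^n c_j$, an empty product (when $n\le m$) being $1$. Here $a\mid b$ means $b=at$ for some integer $t$. *)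

(* Sequences G = (g_1,...,g_k) are `seq nat`, k = size G,
   g_i = nth 0 G i.-1 (1-based indices as in the paper). *)
From mathcomp Require Import all_boot.
Set Implicit Arguments. Unset Strict Implicit. Unset Printing Implicit Defensive.

Definition gi (G : seq nat) (i : nat) : nat := nth 0 G i.-1.

Definition gen (G : seq nat) (n : nat) : Prop :=
  exists a : seq nat, size a = size G /\
    n = \sum_(i < size G) nth 0 a i * nth 0 G i.

Definition minimal (G : seq nat) : Prop :=
  ~ exists s : seq nat, subseq s G /\ size s < size G /\
      (forall n, gen s n <-> gen G n).

Definition dd (G : seq nat) (i : nat) : nat := \big[gcdn/0]_(x <- take i G) x.

Definition cc (G : seq nat) (j : nat) : nat := dd G j.-1 %/ dd G j.

Definition telescopic (G : seq nat) : Prop :=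
  forall j, 2 <= j <= size G -> gen (take j.-1 G) (cc G j * gi G j).

Definition CC (G : seq nat) (m n : nat) : nat := \prod_(m.+1 <= j < n.+1) cc G j.

Definition zz (G : seq nat) (i : nat) : nat := gi G i %/ CC G i (size G).

From mathcomp Require Import all_boot zify.

(* Minimality of G means that no entry g_m is a combination of the others.
   If c_j = 1, telescopy writes g_j as a combination of g_1, ..., g_(j-1); if
   g_j | g_i with i < j, then g_i is a multiple of g_j: the conditions are
   necessary.  Conversely let g_m = sum_(i <> m) f_i g_i, with top index l.
   If l < m, then d_(m-1) divides the sum but not g_m, because c_m > 1.  If
   l > m, then d_(l-1) divides f_l g_l, which forces c_l | f_l, so c_l g_l,
   itself a combination of g_1, ..., g_(l-1), can be traded down.  This
   lowers f_l unless the trade involves g_m, and then g_m = c_l g_l, against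
   g_l not dividing g_m.  Finally z_j | z_i C_(i,j) iff g_j | g_i, because
   g_i = z_i C_(i,k). *)

Definition lincomb (s : seq nat) (f : nat -> nat) : nat :=
  \sum_(0 <= i < size s) f i * nth 0 s i.

Definition scons (a : nat) (f : nat -> nat) (i : nat) : nat :=
  if i is i'.+1 then f i' else a.

Lemma genP s n : gen s n <-> exists f, n = lincomb s f.
Proof.
rewrite /gen /lincomb; split=> [[a [_ ->]]|[f ->]].
  by exists (nth 0 a); rewrite big_mkord.
rewrite big_mkord; exists (mkseq f (size s)); rewrite size_mkseq; split=> //.
by apply: eq_bigr => i _; rewrite nth_mkseq.
Qed.

Lemma lincomb_cons x s f :
  lincomb (x :: s) f = f 0 * x + lincomb s (fun i => f i.+1).
Proof. by rewrite /lincomb /= big_nat_recl. Qed.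

Lemma lincomb_scons x s a f : lincomb (x :: s) (scons a f) = a * x + lincomb s f.
Proof. exact: lincomb_cons. Qed.

Lemma gen_mask b s n : size b = size s ->
  gen (mask b s) n <->
  exists f, n = lincomb s f /\ forall i, i < size s -> ~~ nth false b i -> f i = 0.
Proof.
rewrite genP; elim: s b n => [|x s IH] [|[] b] n //=.
  by split=> [[f ->]|[f [-> _]]]; exists f.
all: move=> [/IH {}IH]; split.
- move=> [f ->]; rewrite lincomb_cons.
  have /IH [f' [-> f'0]] : exists g, lincomb (mask b s) (fun i => f i.+1) =
    lincomb (mask b s) g by eexists.
  by exists (scons (f 0) f'); rewrite lincomb_scons; split=> // [[]].
- move=> [f [-> f0]]; rewrite lincomb_cons.
  have /IH [f' ->] : exists g, lincomb s (fun i => f i.+1) = lincomb s g /\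
    forall i, i < size s -> ~~ nth false b i -> g i = 0.
    by exists (fun i => f i.+1); split=> // i; apply: f0 i.+1.
  by exists (scons (f 0) f'); rewrite lincomb_scons.
- move=> /IH [f [-> f0]].
  by exists (scons 0 f); rewrite lincomb_scons; split=> // [[]].
- move=> [f [-> f0]]; rewrite lincomb_cons f0 // mul0n add0n.
  by apply/IH; exists (fun i => f i.+1); split=> // i; apply: f0 i.+1.
Qed.

Definition comb (G : seq nat) (l : nat) (f : nat -> nat) : nat :=
  \sum_(1 <= i < l.+1) f i * gi G i.

Lemma comb_lincomb G f : comb G (size G) f = lincomb G (fun i => f i.+1).
Proof. by rewrite /comb big_add1. Qed.

Lemma combS G l f : comb G l.+1 f = comb G l f + f l.+1 * gi G l.+1.
Proof. by rewrite /comb big_nat_recr. Qed.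

Lemma combD G l f h : comb G l (fun i => f i + h i) = comb G l f + comb G l h.
Proof. by rewrite /comb -big_split; apply: eq_bigr => i _; rewrite mulnDl. Qed.

Lemma combMl G l a f : comb G l (fun i => a * f i) = a * comb G l f.
Proof. by rewrite /comb big_distrr; apply: eq_bigr => i _; exact/esym/mulnA. Qed.

Lemma eq_comb G l f h : (forall i, 1 <= i <= l -> f i = h i) -> comb G l f = comb G l h.
Proof. by move=> fh; apply: eq_big_nat => i /fh ->. Qed.

Lemma comb_single G l j a : 1 <= j <= l ->
  comb G l (fun i => if i == j then a else 0) = a * gi G j.
Proof.
move=> /andP[j1 jl]; rewrite /comb (big_cat_nat j1 (leq_trans jl _)) //=.
rewrite [X in _ + X]big_ltn // eqxx big_nat_cond big1 ?add0n; last first.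
  by move=> i /andP[/andP[_ ij] _]; rewrite ltn_eqF.
rewrite big_nat_cond big1 ?addn0 // => i /andP[/andP[ji _] _].
by rewrite gtn_eqF.
Qed.

Lemma leq_comb G l f i : 1 <= i <= l -> f i * gi G i <= comb G l f.
Proof.
move=> /andP[i1 il]; rewrite /comb (big_cat_nat i1 (leq_trans il _)) //=.
by rewrite [X in _ + X]big_ltn // addnCA leq_addr.
Qed.

Lemma comb_widen G l n f : l <= n ->
  comb G n (fun i => if i <= l then f i else 0) = comb G l f.
Proof.
move=> ln; rewrite /comb (big_cat_nat (n := l.+1)) //= [X in _ + X]big_nat_cond.
rewrite [X in _ + X]big1 ?addn0.
  by apply: eq_big_nat => i /andP[_ il]; rewrite -ltnS il.
by move=> i /andP[/andP[li _] _]; rewrite leqNgt li.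
Qed.

Lemma gen_combP G n : gen G n <-> exists f, n = comb G (size G) f.
Proof.
rewrite genP; split=> [[f ->]|[f ->]].
  by exists (fun i => f i.-1); rewrite comb_lincomb.
by exists (fun i => f i.+1); rewrite comb_lincomb.
Qed.

Lemma gen_take_comb G l n : l <= size G -> gen (take l G) n -> exists f, n = comb G l f.
Proof.
move=> lG /genP[f ->]; exists (fun i => f i.-1).
rewrite /lincomb size_take_min (minn_idPl lG) /comb big_add1.
by apply: eq_big_nat => i /andP[_ il]; rewrite /gi nth_take.
Qed.

Definition redundant (G : seq nat) (m : nat) : Prop :=
  exists f, f m = 0 /\ gi G m = comb G (size G) f.

Lemma redundant_not_minimal G m : 1 <= m <= size G -> redundant G m -> ~ minimal G.
Proof.
move=> /andP[m1 mG] [f [fm gm]]; apply.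
have mE : m.-1.+1 = m by rewrite prednK.
pose b := mkseq (fun i => i.+1 != m) (size G).
have bG : size b = size G by rewrite size_mkseq.
exists (mask b G); split; first exact: mask_subseq.
split.
  have bm : ~~ nth false b m.-1 by rewrite nth_mkseq ?mE ?eqxx //; lia.
  have : has (predC id) b by apply/(has_nthP false); exists m.-1; rewrite ?bG //; lia.
  by rewrite size_mask // has_count -bG; have := count_predC id b; lia.
move=> n; rewrite gen_mask // gen_combP; split=> [[f0 [-> _]]|[f0 ->]].
  by exists (fun i => f0 i.-1); rewrite comb_lincomb.
pose g i := (if i == m then 0 else f0 i) + f0 m * f i.
exists (fun i => g i.+1); split.
  rewrite -(comb_lincomb G g) combD combMl -gm.
  rewrite -(comb_single G (size G) m (f0 m)) ?m1 ?mG // -combD.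
  by apply: eq_comb => i _; case: (i =P m) => [->|_]; rewrite ?addn0.
move=> i iG; rewrite nth_mkseq // negbK => /eqP im.
by rewrite /g im eqxx fm muln0.
Qed.

Lemma irredundant_minimal G :
  (forall m, 1 <= m <= size G -> ~ redundant G m) -> minimal G.
Proof.
move=> irr [s [/subseqP[b bG ->] [lt_s eq_gen]]].
have /(has_nthP false)[q qb bq] : has (predC id) b.
  by rewrite has_count; move: lt_s; rewrite size_mask // -bG -(count_predC id b); lia.
rewrite bG in qb.
have /eq_gen /gen_mask-/(_ bG) [f [gq f0]] : gen G (gi G q.+1).
  apply/gen_combP; exists (fun i => if i == q.+1 then 1 else 0).
  by rewrite comb_single ?mul1n.
apply: (irr q.+1 qb); exists (fun i => f i.-1); split; first exact: f0.
by rewrite comb_lincomb.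
Qed.

Lemma minimalP G : minimal G <-> forall m, 1 <= m <= size G -> ~ redundant G m.
Proof.
split; last exact: irredundant_minimal.
by move=> minG m mG /(redundant_not_minimal G m mG).
Qed.

Lemma dd0 G : dd G 0 = 0.
Proof. by rewrite /dd take0 big_nil. Qed.

Lemma ddS G n : dd G n.+1 = gcdn (dd G n) (gi G n.+1).
Proof.
rewrite /dd /gi /=; case: (ltnP n (size G)) => nG.
  by rewrite (take_nth 0 nG) -cats1 big_cat big_seq1.
by rewrite !take_oversize ?(leq_trans nG) // nth_default // gcdn0.
Qed.

Lemma dd_dvd_gi G i : 1 <= i -> dd G i %| gi G i.
Proof. by case: i => // i _; rewrite ddS dvdn_gcdr. Qed.

Lemma dd_dvd_leq G i j : i <= j -> dd G j %| dd G i.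
Proof.
move=> /subnK <-; elim: (j - i) => [|t IH] //.
by rewrite addSn ddS (dvdn_trans (dvdn_gcdl _ _) IH).
Qed.

Lemma dd_dvd_comb G l f : dd G l %| comb G l f.
Proof.
rewrite /comb big_nat_cond; apply: dvdn_sum => i /andP[/andP[i1 il] _].
rewrite ltnS in il.
by rewrite dvdn_mull // (dvdn_trans (dd_dvd_leq G _ _ il)) ?dd_dvd_gi.
Qed.

Lemma dd_gt0 G i : 0 < gi G 1 -> 1 <= i -> 0 < dd G i.
Proof.
move=> g1 i1; apply: dvdn_gt0 (dd_dvd_leq G _ _ i1).
by rewrite ddS dd0 gcd0n.
Qed.

Lemma cc_mul G j : cc G j * dd G j = dd G j.-1.
Proof. by rewrite /cc divnK //; case: j => // j; apply: dd_dvd_leq. Qed.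

Lemma cc_gt0 G j : 0 < gi G 1 -> 2 <= j -> 0 < cc G j.
Proof.
move=> g1; case: j => // j j2.
by have := dd_gt0 G _ g1 j2; rewrite -[j]/(j.+1.-1) -cc_mul muln_gt0 => /andP[].
Qed.

Lemma cc_eq1 G j : 0 < dd G j -> dd G j.-1 %| gi G j -> cc G j = 1.
Proof.
case: j => [|j]; first by rewrite dd0.
by move=> ddj /gcdn_idPl ddE; rewrite /cc ddS ddE divnn -ddE -ddS ddj.
Qed.

(* Writing d_l = gcd(d_{l-1}, g_l): d_{l-1} | a g_l forces d_{l-1} | a d_l. *)
Lemma cc_dvd_coef G l a : 0 < dd G l.+1 -> dd G l %| a * gi G l.+1 -> cc G l.+1 %| a.
Proof.
move=> ddl dvd_ag; rewrite -(dvdn_pmul2r ddl) cc_mul /=.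
by rewrite ddS muln_gcdr dvdn_gcd dvd_ag andbT dvdn_mull.
Qed.

Lemma CC_mul G m n : m <= n -> CC G m n * dd G n = dd G m.
Proof.
move=> /subnK <-; elim: (n - m) => [|t IH].
  by rewrite /CC big_geq // mul1n.
rewrite /CC addSn big_nat_recr /=; last by rewrite ltnS leq_addl.
by rewrite -mulnA cc_mul IH.
Qed.

Lemma CC_cat G i j k : i <= j -> j <= k -> CC G i k = CC G i j * CC G j k.
Proof. by move=> ij jk; rewrite /CC (big_cat_nat (n := j.+1)). Qed.

Lemma CC_gt0 G m n : 0 < gi G 1 -> 1 <= m -> m <= n -> 0 < CC G m n.
Proof.
move=> g1 m1 mn; have := dd_gt0 G _ g1 m1.
by rewrite -(CC_mul G _ _ mn) muln_gt0 => /andP[].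
Qed.

Lemma zzK G i : 0 < gi G 1 -> 1 <= i <= size G -> zz G i * CC G i (size G) = gi G i.
Proof.
move=> g1 /andP[i1 iG]; rewrite /zz divnK //.
by rewrite (dvdn_trans _ (dd_dvd_gi G _ i1)) // -(CC_mul G _ _ iG) dvdn_mulr.
Qed.

Lemma dvd_zzE G i j : 0 < gi G 1 -> 1 <= i -> i < j -> j <= size G ->
  (zz G j %| zz G i * CC G i j) = (gi G j %| gi G i).
Proof.
move=> g1 i1 ij jG; have j1 : 1 <= j by apply: leq_trans ij.
rewrite -(dvdn_pmul2r (CC_gt0 G _ _ g1 j1 jG)) -mulnA -CC_cat ?(ltnW ij) //.
by rewrite !zzK ?i1 ?j1 ?jG ?(leq_trans (ltnW ij) jG).
Qed.

Lemma telescopic_comb G j : telescopic G -> 2 <= j <= size G ->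
  exists h, cc G j * gi G j = comb G j.-1 h.
Proof.
move=> tel jG; apply: gen_take_comb (tel j jG).
by case/andP: jG => _; apply: leq_trans (leq_pred j).
Qed.

Lemma cc1_redundant G j : telescopic G -> 2 <= j <= size G -> cc G j = 1 ->
  redundant G j.
Proof.
move=> tel jG c1; have [h] := telescopic_comb G j tel jG; rewrite c1 mul1n => gj.
have /andP[j2 jk] := jG.
exists (fun i => if i <= j.-1 then h i else 0); split.
  by rewrite leqNgt ltn_predL (leq_trans _ j2).
by rewrite comb_widen ?gj // (leq_trans (leq_pred j)).
Qed.

Lemma dvd_redundant G i j : 1 <= i -> i < j -> j <= size G -> gi G j %| gi G i ->
  redundant G i.
Proof.
move=> i1 ij jG dvd_ji; exists (fun t => if t == j then gi G i %/ gi G j else 0).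
by rewrite ltn_eqF // comb_single ?divnK ?jG ?(leq_ltn_trans _ ij).
Qed.

Lemma comb_replace_top G l f h c : c <= f l.+1 -> c * gi G l.+1 = comb G l h ->
  comb G l.+1 f =
  comb G l.+1 (fun i => if i == l.+1 then f l.+1 - c else f i + h i).
Proof.
move=> cf ch; rewrite !combS eqxx [in RHS](eq_comb G l _ (fun i => f i + h i)).
  by rewrite combD -ch -addnA -mulnDl subnKC.
by move=> i /andP[_ il] /=; rewrite ltn_eqF // ltnS.
Qed.

Section Sufficiency.

Variable G : seq nat.
Hypothesis tel : telescopic G.
Hypothesis g1_gt0 : 0 < gi G 1.
Hypothesis cc_gt1 : forall j, 2 <= j <= size G -> 1 < cc G j.
Hypothesis gi_ndvd : forall i j, 1 <= i -> i < j -> j <= size G -> ~ gi G j %| gi G i.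
Variable m : nat.
Hypothesis mG : 1 <= m <= size G.

Lemma dd_pred_ndvd : ~~ (dd G m.-1 %| gi G m).
Proof.
have /andP[m1 mk] := mG; apply/negP => dvd_m.
case: (ltnP 1 m) => [m2 | m_le1].
  by have := cc_gt1 m; rewrite m2 mk => /(_ isT); rewrite cc_eq1 ?dd_gt0.
have m_eq1 : m = 1 by apply/eqP; rewrite eqn_leq m_le1.
by move: dvd_m g1_gt0; rewrite m_eq1 /= dd0 dvd0n => /eqP ->.
Qed.

Lemma not_comb_below l f : l < m -> gi G m <> comb G l f.
Proof.
move=> lm gm; apply/negP: dd_pred_ndvd.
by rewrite gm (dvdn_trans (dd_dvd_leq G l _ _)) ?dd_dvd_comb // -ltnS (ltn_predK lm).
Qed.

Lemma not_comb_step l : m <= l -> l < size G ->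
  (forall f, f m = 0 -> gi G m <> comb G l f) ->
  forall f, f m = 0 -> gi G m <> comb G l.+1 f.
Proof.
move=> ml lG IH; have /andP[m1 _] := mG.
have l2 : 2 <= l.+1 <= size G by rewrite ltnS (leq_trans m1 ml).
suff top_coef a f : f l.+1 = a -> f m = 0 -> gi G m <> comb G l.+1 f.
  by move=> f; apply: top_coef.
elim/ltn_ind: a f => a IHa f fa fm gm; case: (posnP a) => [a0 | a_gt0].
  by apply: (IH f fm); rewrite gm combS fa a0 mul0n addn0.
set c := cc G l.+1.
have c_dvd_a : c %| a.
  apply: cc_dvd_coef; first exact: dd_gt0.
  rewrite -fa -(dvdn_addr _ (dd_dvd_comb G l f)) -combS -gm.
  exact: dvdn_trans (dd_dvd_leq G _ _ ml) (dd_dvd_gi G _ m1).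
have c_le_a : c <= a := dvdn_leq a_gt0 c_dvd_a.
have [h ch] := telescopic_comb G l.+1 tel l2.
case: (posnP (h m)) => [hm0 | hm_gt0].
  apply: (IHa (a - c) _ (fun i => if i == l.+1 then f l.+1 - c else f i + h i)).
  - by rewrite ltn_subrL a_gt0 cc_gt0 //; case/andP: l2.
  - by rewrite eqxx fa.
  - by rewrite ltn_eqF ?fm ?hm0 // ltnS.
  - by rewrite -comb_replace_top ?fa.
(* Otherwise g_m <= h_m g_m <= c g_{l+1} <= a g_{l+1} <= g_m, so g_{l+1} | g_m. *)
apply: (gi_ndvd m l.+1 m1 _ lG) => //.
suff -> : gi G m = c * gi G l.+1 by apply: dvdn_mull.
apply/eqP; rewrite eqn_leq; apply/andP; split.
  by rewrite /= ch (leq_trans (leq_pmull _ hm_gt0)) // leq_comb // m1.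
by rewrite [X in _ <= X]gm combS fa (leq_trans _ (leq_addl _ _)) // leq_mul.
Qed.

Lemma not_comb l : l <= size G -> forall f, f m = 0 -> gi G m <> comb G l f.
Proof.
have /andP[m1 _] := mG.
elim: l => [|l IH] lG f fm; first exact: not_comb_below.
case: (ltngtP l.+1 m) => [lm | ml | lm]; first exact: not_comb_below.
  by rewrite ltnS in ml; apply: not_comb_step ml lG (IH (ltnW lG)) f fm.
by rewrite combS lm fm mul0n addn0; apply: IH (ltnW lG) f fm.
Qed.

Lemma telescopic_irredundant : ~ redundant G m.
Proof. by move=> [f [fm gm]]; apply: not_comb (leqnn _) f fm gm. Qed.

End Sufficiency.

Theorem mainTheorem6 (G : seq nat) :
  telescopic G -> 0 < gi G 1 ->
  (minimal G <->
   ((forall j, 2 <= j <= size G -> 1 < cc G j) /\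
    (forall i j, 1 <= i -> i < j -> j <= size G ->
       ~ (zz G j %| zz G i * CC G i j)))).
Proof.
move=> tel g1; rewrite minimalP; split=> [irr | [cc_gt1 zz_ndvd] m mG].
  split=> [j jG | i j i1 ij jG].
    have /andP[j2 jk] := jG; rewrite ltn_neqAle eq_sym cc_gt0 // andbT.
    by apply/eqP => /(cc1_redundant G j tel jG); apply: irr; rewrite jk (ltnW j2).
  rewrite dvd_zzE // => /(dvd_redundant G i j i1 ij jG).
  by apply: irr; rewrite i1 (leq_trans (ltnW ij) jG).
apply: (telescopic_irredundant G tel g1 cc_gt1 _ m mG) => i j i1 ij jG.
by rewrite -dvd_zzE //; apply: zz_ndvd.
Qed.
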